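(* Assume the setting and standing assumptions (A1), (A2) described in the context. If there exists $\Delta \in \mathcal{D}$ for which the system exhibits microphase separation, then $\Psi^+$ is initially positive, i.e. there exists $\hat\kappa>0$ such that $\Psi^+(\kappa)>0$ for all $\kappa\in(0,\hat\kappa)$.
   Context: Let $n,m\ge 1$, $B\in\mathbb{Z}^{n\times m}$, $C\in\mathbb{Z}^{m\times n}$. Given bounds $0\le \Delta_j^-\le \Delta_j^+<\infty$ ($j=1,\dots,m$), let $\mathcal{D}$ be the set of diagonal matrices $\Delta=\mathrm{diag}(\Delta_1,\dots,\Delta_m)$ with $\Delta_j^-\le\Delta_j\le\Delta_j^+$ for all $j$. Let $J_2,J_4\in\mathbb{R}^{n\times n}$ be symmetric. Standing assumptions: (A1) for every $\Delta\in\mathcal{D}$, the matrix $B\Delta C$ is singular and has $n-1$ eigenvalues (counted with multiplicity) with negative real part (so $0$ is a simple eigenvalue), and there is a nonzero vector $v\ge 0$ with $v^\top B=0$; (A2) $J_2$ is indefinite, $J_4$ is negative semidefinite, and there exists $\bar\kappa$ such that $\bar\kappa^2 J_2+\bar\kappa^4 J_4$ is negative definite. For real $\kappa\ge 0$ and $\Delta\in\mathcal{D}$ set $J(\Delta,\kappa)=B\Delta C+\kappa^2 J_2+\kappa^4 J_4$ and let $\rho(\Delta,\kappa)$ be its spectral abscissa (the maximum real part of its eigenvalues). Define $\Psi^-(\kappa)=\min_{\Delta\in\mathcal{D}}\det[-J(\Delta,\kappa)]$ and $\Psi^+(\kappa)=\max_{\Delta\in\mathcal{D}}\det[-J(\Delta,\kappa)]$.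 A continuous function $f$ on $[0,\infty)$ is initially positive (resp. negative) if there is $\hat\kappa>0$ with $f>0$ (resp. $f<0$) on $(0,\hat\kappa)$; it has a negative sign change if $f(\kappa_1)>0>f(\kappa_2)$ for some $\kappa_1<\kappa_2$, and a positive sign change if $f(\kappa_1)<0<f(\kappa_2)$ for some $\kappa_1<\kappa_2$. For a given $\Delta\in\mathcal{D}$, the system exhibits microphase separation (MS) if there exists $\hat\kappa>0$ with $\rho(\Delta,\kappa)<0$ for all $\kappa\in(0,\hat\kappa)$, and there exist $\hat\kappa<\kappa_1<\kappa_2$ with $\rho(\Delta,\kappa_1)>0$ and $\rho(\Delta,\kappa_2)<0$. The system exhibits robust MS if it exhibits MS for every $\Delta\in\mathcal{D}$. *)

From HB Require Import structures.
From mathcomp Require Import all_boot all_order all_algebra.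
From mathcomp Require Import complex.
From mathcomp Require Import classical_sets reals.
Set Implicit Arguments. Unset Strict Implicit. Unset Printing Implicit Defensive.
Import Order.TTheory GRing.Theory Num.Theory.
Local Open Scope ring_scope.
Local Open Scope classical_set_scope.

Section Defs.
Variable R : realType.

Definition mxZR (p q : nat) (A : 'M[int]_(p, q)) : 'M[R]_(p, q) :=
  map_mx (fun z : int => z%:~R) A.

Definition mxRC (p : nat) (A : 'M[R]_p) : 'M[R[i]]_p :=
  map_mx (fun x : R => (x%:C)%C) A.

Definition is_eigenvalue (p : nat) (A : 'M[R]_p) (z : R[i]) : Prop :=
  root (char_poly (mxRC A)) z.

(* spectral abscissa: maximum real part of the eigenvalues
   (the set is finite and nonempty for p >= 1, so sup = max) *)
Definition spectral_abscissa (p : nat) (A : 'M[R]_p) : R :=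
  sup [set complex.Re z | z in is_eigenvalue A].

(* "A has exactly k eigenvalues (counted with multiplicity) with negative real part":
   s is the multiset of eigenvalues (roots of the monic char. polynomial) *)
Definition n_neg_eigs (p : nat) (A : 'M[R]_p) (k : nat) : Prop :=
  exists s : seq R[i], char_poly (mxRC A) = \prod_(z <- s) ('X - z%:P)
                       /\ count (fun z : R[i] => complex.Re z < 0) s = k.

(* Delta in D : diagonal entries d j within [lo j, hi j] *)
Definition inD (m : nat) (lo hi : 'rV[R]_m) (d : 'rV[R]_m) : Prop :=
  forall j : 'I_m, lo 0 j <= d 0 j <= hi 0 j.

Definition BDC (n m : nat) (B : 'M[int]_(n, m)) (C : 'M[int]_(m, n))
  (d : 'rV[R]_m) : 'M[R]_n := mxZR B *m diag_mx d *m mxZR C.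

Definition Jmat (n m : nat) (B : 'M[int]_(n, m)) (C : 'M[int]_(m, n))
  (J2 J4 : 'M[R]_n) (d : 'rV[R]_m) (k : R) : 'M[R]_n :=
  BDC B C d + (k ^+ 2) *: J2 + (k ^+ 4) *: J4.

Definition rho (n m : nat) (B : 'M[int]_(n, m)) (C : 'M[int]_(m, n))
  (J2 J4 : 'M[R]_n) (d : 'rV[R]_m) (k : R) : R :=
  spectral_abscissa (Jmat B C J2 J4 d k).

(* Psi^+(kappa) = max over D of det(-J(Delta,kappa)); D is compact and the map is
   continuous, so the max is attained and equals the sup *)
Definition Psi_plus (n m : nat) (B : 'M[int]_(n, m)) (C : 'M[int]_(m, n))
  (J2 J4 : 'M[R]_n) (lo hi : 'rV[R]_m) (k : R) : R :=
  sup [set \det (- Jmat B C J2 J4 d k) | d in inD lo hi].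

Definition qform (n : nat) (M : 'M[R]_n) (x : 'cV[R]_n) : R := (x^T *m M *m x) 0 0.

Definition indefinite (n : nat) (M : 'M[R]_n) : Prop :=
  (exists x, 0 < qform M x) /\ (exists y, qform M y < 0).
Definition neg_semidef (n : nat) (M : 'M[R]_n) : Prop := forall x, qform M x <= 0.
Definition neg_def (n : nat) (M : 'M[R]_n) : Prop := forall x, x != 0 -> qform M x < 0.

Definition A1 (n m : nat) (B : 'M[int]_(n, m)) (C : 'M[int]_(m, n))
  (lo hi : 'rV[R]_m) : Prop :=
  (forall d, inD lo hi d ->
     \det (BDC B C d) = 0 /\ n_neg_eigs (BDC B C d) n.-1)
  /\ exists v : 'cV[R]_n, v != 0 /\ (forall i, 0 <= v i 0) /\ v^T *m mxZR B = 0.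

Definition A2 (n : nat) (J2 J4 : 'M[R]_n) : Prop :=
  J2^T = J2 /\ J4^T = J4 /\ indefinite J2 /\ neg_semidef J4 /\
  exists kb : R, neg_def (kb ^+ 2 *: J2 + kb ^+ 4 *: J4).

Definition MS (n m : nat) (B : 'M[int]_(n, m)) (C : 'M[int]_(m, n))
  (J2 J4 : 'M[R]_n) (d : 'rV[R]_m) : Prop :=
  exists kh : R, 0 < kh /\
    (forall k, 0 < k < kh -> rho B C J2 J4 d k < 0) /\
    exists k1 k2, kh < k1 /\ k1 < k2 /\
      0 < rho B C J2 J4 d k1 /\ rho B C J2 J4 d k2 < 0.

End Defs.

(* Microphase separation at some Delta0 makes J(Delta0, kappa) stable for all
   small kappa > 0.  The characteristic polynomial of a real matrix whose
   eigenvalues all have negative real part is monic without roots in [0, +oo),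
   hence positive at 0, i.e. det(-J(Delta0, kappa)) > 0.  Since the determinant
   is bounded on the box D, Psi^+(kappa) is a genuine supremum and dominates
   det(-J(Delta0, kappa)). *)

From HB Require Import structures.
From mathcomp Require Import all_boot all_order all_algebra.
From mathcomp Require Import perm complex polyrcf.
From mathcomp Require Import classical_sets reals.
Import Order.TTheory GRing.Theory Num.Theory.
Set Implicit Arguments. Unset Strict Implicit. Unset Printing Implicit Defensive.
Local Open Scope ring_scope.
Local Open Scope complex_scope.

Lemma horner0_char_poly (R : comNzRingType) n (A : 'M[R]_n) :
  (char_poly A).[0] = \det (- A).
Proof. by rewrite horner_coef0 char_poly_det -scaleN1r detZ. Qed.

Lemma monic_noroot_horner0_gt0 (R : rcfType) (p : {poly R}) :
  p \is monic -> {in `[0, +oo[, forall x, ~~ root p x} -> 0 < p.[0].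
Proof.
move=> /monicP p_monic p_noroot.
have := sgp_pinftyP p_noroot; rewrite /sgp_pinfty p_monic sgr1.
by move=> /(_ 0); rewrite in_itv /= lexx => /(_ isT) /eqP; rewrite sgr_cp0.
Qed.

Section SpectralAbscissa.
Variables (R : realType) (n : nat) (A : 'M[R]_n).

Lemma is_eigenvalue_root_char_poly (x : R) :
  root (char_poly A) x -> is_eigenvalue A x%:C.
Proof.
rewrite /is_eigenvalue /mxRC.
change (map_mx (fun x : R => x%:C) A) with (map_mx (real_complex R) A).
by rewrite -map_char_poly fmorph_root.
Qed.

Lemma spectral_abscissa_lt0_noroot :
  spectral_abscissa A < 0 -> {in `[0, +oo[, forall x, ~~ root (char_poly A) x}.
Proof.
rewrite /spectral_abscissa; set E := (X in sup X) => E_lt0 x.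
rewrite in_itv andbT /= => x_ge0; apply/negP => /is_eigenvalue_root_char_poly Ex.
have [E_sup | E_nosup] := boolp.pselect (has_sup E); last first.
  by move: E_lt0; rewrite sup_out // ltxx.
have x_le_sup : x <= sup E by apply: (ub_le_sup (proj2 E_sup)); exists x%:C.
by move: (le_lt_trans x_ge0 (le_lt_trans x_le_sup E_lt0)); rewrite ltxx.
Qed.

Lemma spectral_abscissa_lt0_det_gt0 : spectral_abscissa A < 0 -> 0 < \det (- A).
Proof.
move=> /spectral_abscissa_lt0_noroot; rewrite -horner0_char_poly.
exact/monic_noroot_horner0_gt0/char_poly_monic.
Qed.

End SpectralAbscissa.

Lemma norm_det_le (R : numDomainType) n (M : 'M[R]_n) (c : 'I_n -> 'I_n -> R) :
  (forall i j, `|M i j| <= c i j) -> `|\det M| <= \sum_(s : 'S_n) \prod_i c i (s i).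
Proof.
move=> M_le_c; apply: le_trans (ler_norm_sum _ _ _) _.
apply: ler_sum => s _.
rewrite normrM normrX normrN1 expr1n mul1r normr_prod.
by apply: ler_prod => i _; rewrite normr_ge0 M_le_c.
Qed.

Section PsiPlus.
Variables (R : realType) (n m : nat) (B : 'M[int]_(n, m)) (C : 'M[int]_(m, n)).
Variables (J2 J4 : 'M[R]_n) (lo hi : 'rV[R]_m).
Hypothesis lo_ge0 : forall j, 0 <= lo 0 j.

Lemma norm_BDC_le d : inD lo hi d -> forall i j,
  `|BDC B C d i j| <= \sum_l `|mxZR R B i l| * hi 0 l * `|mxZR R C l j|.
Proof.
move=> d_in i j; rewrite /BDC mul_mx_diag mxE.
apply: le_trans (ler_norm_sum _ _ _) _.
apply: ler_sum => l _; rewrite mxE !normrM.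
have /andP[lo_le_d d_le_hi] := d_in l.
rewrite (ger0_norm (le_trans (lo_ge0 l) lo_le_d)).
by apply: ler_wpM2r => //; apply: ler_wpM2l.
Qed.

Lemma norm_det_Jmat_bounded k : exists M : R, forall d, inD lo hi d ->
  `|\det (- Jmat B C J2 J4 d k)| <= M.
Proof.
pose c i j := \sum_l `|mxZR R B i l| * hi 0 l * `|mxZR R C l j|
              + `|k ^+ 2| * `|J2 i j| + `|k ^+ 4| * `|J4 i j|.
exists (\sum_(s : 'S_n) \prod_i c i (s i)) => d d_in.
apply: norm_det_le => i j; rewrite mxE normrN /Jmat mxE.
apply: le_trans (ler_normD _ _) _; apply: lerD; last by rewrite mxE normrM.
rewrite mxE; apply: le_trans (ler_normD _ _) _.
apply: lerD; last by rewrite mxE normrM.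
exact: norm_BDC_le.
Qed.

Lemma det_Jmat_le_Psi_plus d k : inD lo hi d ->
  \det (- Jmat B C J2 J4 d k) <= Psi_plus B C J2 J4 lo hi k.
Proof.
move=> d_in; have [M M_ub] := norm_det_Jmat_bounded k.
apply: ub_le_sup; last by exists d.
exists M => _ [d' d'_in <-].
exact: le_trans (ler_norm _) (M_ub d' d'_in).
Qed.

End PsiPlus.

Theorem theorem1 (R : realType) (n m : nat) (hn : (0 < n)%N) (hm : (0 < m)%N)
  (B : 'M[int]_(n, m)) (C : 'M[int]_(m, n)) (lo hi : 'rV[R]_m)
  (hlo : forall j, 0 <= lo 0 j) (hlohi : forall j, lo 0 j <= hi 0 j)
  (J2 J4 : 'M[R]_n)
  (hA1 : A1 B C lo hi) (hA2 : A2 J2 J4)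
  (hMS : exists d, inD lo hi d /\ MS B C J2 J4 d) :
  exists kh : R, 0 < kh /\
    forall k : R, 0 < k < kh -> 0 < Psi_plus B C J2 J4 lo hi k.
Proof.
have [d [d_in [kh [kh_gt0 [rho_lt0 _]]]]] := hMS.
exists kh; split=> // k k_small.
apply: lt_le_trans (det_Jmat_le_Psi_plus B C J2 J4 hlo k d_in).
exact/spectral_abscissa_lt0_det_gt0/rho_lt0.
Qed.
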